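(* Let $G$ be a finite group with $|G'|=2$. (1) $\mathcal B(G)$ is seminormal. (2) $\mathcal C(\mathcal B(G),\mathcal F(G))$ is a Clifford semigroup. In particular, if $S\in\mathcal F(G)$ with $\pi(S)=\{g\}$ and $n=\mathrm{ord}(g)$, then $\{[S],[S^{[2]}],\ldots,[S^{[n]}]\}$ is a cyclic subgroup of $\mathcal C(\mathcal B(G),\mathcal F(G))$ of order $n$ generated by $[S]$. (3) $|\mathcal C(\mathcal B(G),\mathcal F(G))|\le|\mathsf Z(G)|+\prod_{g\in G\setminus\mathsf Z(G)}\mathrm{ord}(g)$.
   Context: Let $G$ be a finite group written multiplicatively with identity $1_G$; $G'$ is its commutator subgroup and $\mathsf Z(G)$ its center. $\mathcal F(G)$ is the free abelian monoid with basis $G$ (sequences $S=g_1\boldsymbol{\cdot}\ldots\boldsymbol{\cdot}g_\ell$, operation $\boldsymbol{\cdot}$ = concatenation, $S^{[k]}$ the $k$-fold product of $S$ with itself). $\pi(S)=\{g_{\tau(1)}\cdots g_{\tau(\ell)}:\tau\text{ a permutation of }[1,\ell]\}$, $\pi$ of the empty sequence is $\{1_G\}$, and $\mathcal B(G)=\{S\in\mathcal F(G):1_G\in\pi(S)\}$. For $S,S'\in\mathcal F(G)$, $S\sim S'$ means: for all $T\in\mathcal F(G)$, $S\boldsymbol{\cdot}T\in\mathcal B(G)\iff S'\boldsymbol{\cdot}T\in\mathcal B(G)$; this is a congruence, $[S]$ is the class of $S$, and $\mathcal C(\mathcal B(G),\mathcal F(G))$ is the set of classes, an additively written commutative semigroup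 with $[S]+[T]=[S\boldsymbol{\cdot}T]$. A monoid $H$ with quotient group $\mathsf q(H)$ is seminormal if $x\in\mathsf q(H)$ and $x^2,x^3\in H$ imply $x\in H$. A commutative semigroup is a Clifford semigroup if every element lies in some subgroup of it. *)

From HB Require Import structures.
From mathcomp Require Import all_boot all_order all_algebra all_fingroup all_solvable.
Set Implicit Arguments. Unset Strict Implicit. Unset Printing Implicit Defensive.
Import GRing.Theory.

(* The group G is the whole finite group type gT.
   The free abelian monoid F(G) with basis G is modelled as the
   multiplicity functions {ffun gT -> nat}; concatenation is pointwise
   addition. *)
Definition fseq (gT : finGroupType) := {ffun gT -> nat}.

Definition fcat (gT : finGroupType) (S T : fseq gT) : fseq gT :=
  [ffun x => (S x + T x)%N].

Definition fpow (gT : finGroupType) (S : fseq gT) (k : nat) : fseq gT :=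
  [ffun x => (k * S x)%N].

(* g \in pi(S): g is the product of the terms of S in some order
   (an ordering of S is a list t with the multiplicities of S). *)
Definition in_pi (gT : finGroupType) (S : fseq gT) (g : gT) : Prop :=
  exists t : seq gT, (forall x, count_mem x t = S x) /\
                     (\prod_(x <- t) x)%g = g.

Definition inB (gT : finGroupType) (S : fseq gT) : Prop := in_pi S 1%g.

Definition simB (gT : finGroupType) (S S' : fseq gT) : Prop :=
  forall T : fseq gT, inB (fcat S T) <-> inB (fcat S' T).

(* The free abelian group Z^(G) = q(F(G)), containing q(H) for a submonoid H. *)
Definition embZ (gT : finGroupType) (S : fseq gT) : {ffun gT -> int} :=
  [ffun x => ((S x)%:Z)%R].

Definition inZ (gT : finGroupType) (H : fseq gT -> Prop) (x : {ffun gT -> int}) : Prop :=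
  exists a, H a /\ x = embZ a.

Definition in_quot (gT : finGroupType) (H : fseq gT -> Prop) (x : {ffun gT -> int}) : Prop :=
  exists a b, H a /\ H b /\ x = [ffun g => ((a g)%:Z - (b g)%:Z)%R].

Definition zpow (gT : finGroupType) (x : {ffun gT -> int}) (k : nat) : {ffun gT -> int} :=
  [ffun g => (x g *+ k)%R].

Definition seminormal (gT : finGroupType) (H : fseq gT -> Prop) : Prop :=
  forall x, in_quot H x -> inZ H (zpow x 2) -> inZ H (zpow x 3) -> inZ H x.

(* A subgroup of the class semigroup C(B(G),F(G)), given as the union K of
   the classes it contains (so K is ~-saturated). *)
Definition class_subgroup (gT : finGroupType) (K : fseq gT -> Prop) : Prop :=
  [/\ (forall S S', simB S S' -> K S -> K S'),
      (forall S T, K S -> K T -> K (fcat S T)) &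
      exists2 E, K E &
        (forall S, K S -> simB (fcat E S) S) /\
        (forall S, K S -> exists2 T, K T & simB (fcat S T) E)].

Definition clifford_class_semigroup (gT : finGroupType) : Prop :=
  forall S : fseq gT, exists2 K, class_subgroup K & K S.

From mathcomp Require Import all_boot all_order all_algebra all_fingroup all_solvable.
From Stdlib Require Import ClassicalEpsilon.
From mathcomp Require Import zify.
Set Implicit Arguments. Unset Strict Implicit. Unset Printing Implicit Defensive.

(* As G' has order 2 it is central, so reordering the terms of S changes their
   product only by an element of G', and not at all if the terms commute.
   Hence, with sigma(S) the product in a fixed order, pi(S) = {sigma(S)} when
   the support of S is abelian and pi(S) = sigma(S) G' otherwise; S is in B(G)
   iff sigma(S) = 1, resp. sigma(S) \in G'.  The class of S is thus determined
   by whether its support is abelian, by sigma(S) and, in the abelian case, by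
   the centraliser of the support, which only depends on the non-central cosets
   of Z(G) met by the support.  This gives seminormality, the groups of classes
   (the powers of an abelian S modulo the order of sigma(S); all nonabelian
   classes together), and the bound, because G/Z(G) is not cyclic and so has
   index at least 4. *)

Lemma double_succ_le_exp2 m : 3 <= m -> m.+1.*2 <= 2 ^ m.
Proof.
elim: m => // m IHm; rewrite ltnS leq_eqVlt => /predU1P[<- //|m3].
by rewrite expnS; move: (IHm m3); lia.
Qed.

Lemma succ_mul_succ_le_exp2 m n : 3 <= m -> 0 < n -> m.+1 * n.+1 <= 2 ^ (m * n).
Proof.
move=> /double_succ_le_exp2 le_m_exp; elim: n => // n IHn _.
have [->|n0] := posnP n; first by rewrite muln1; move: le_m_exp; lia.
rewrite (mulnS m n) expnD; move: (IHn n0) (leq_trans (leqnSn _) le_m_exp); nia.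
Qed.

Lemma finite_transversal (T : eqType) (I : finType) (A : {set I}) (f : T -> I) (x0 : T) :
  (forall x, f x \in A) ->
  exists s : seq T, size s <= #|A| /\ forall x, exists2 y, y \in s & f y = f x.
Proof.
move=> fA; pose rep i := epsilon (inhabits x0) (fun x => f x = i).
exists [seq rep i | i <- enum A]; split; first by rewrite size_map -cardE.
move=> x; exists (rep (f x)); first by rewrite map_f ?mem_enum.
exact: (epsilon_spec _ (fun y => f y = f x) (ex_intro _ x erefl)).
Qed.

Section Sequences.
Variable gT : finGroupType.
Implicit Types (S T U : fseq gT) (s t : seq gT).
Local Open Scope group_scope.

Lemma fcatC S T : fcat S T = fcat T S.
Proof. by apply/ffunP => x; rewrite !ffunE addnC. Qed.

Lemma fcatA S T U : fcat (fcat S T) U = fcat S (fcat T U).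
Proof. by apply/ffunP => x; rewrite !ffunE addnA. Qed.

Lemma fpow1 S : fpow S 1 = S.
Proof. by apply/ffunP => x; rewrite !ffunE mul1n. Qed.

Lemma fpowS S k : fpow S k.+1 = fcat S (fpow S k).
Proof. by apply/ffunP => x; rewrite !ffunE mulSn. Qed.

Lemma fpowD S a b : fpow S (a + b) = fcat (fpow S a) (fpow S b).
Proof. by apply/ffunP => x; rewrite !ffunE mulnDl. Qed.

Lemma simB_sym S S' : simB S S' -> simB S' S.
Proof. by move=> h T; split => /h. Qed.

Lemma simB_trans S1 S2 S3 : simB S1 S2 -> simB S2 S3 -> simB S1 S3.
Proof. by move=> h1 h2 T; split => [/h1/h2|/h2/h1]. Qed.

Lemma simB_catr S S' T : simB S S' -> simB (fcat S T) (fcat S' T).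
Proof. by move=> h U; rewrite !fcatA; apply: h. Qed.

Lemma simB_catl S S' T : simB S S' -> simB (fcat T S) (fcat T S').
Proof. by move=> h; rewrite !(fcatC T); apply: simB_catr. Qed.

Lemma simB_cat S S' T T' : simB S S' -> simB T T' -> simB (fcat S T) (fcat S' T').
Proof. by move=> h1 h2; apply: simB_trans (simB_catr T h1) (simB_catl S' h2). Qed.

Lemma class_subgroup_fpow (K : fseq gT -> Prop) S k :
  class_subgroup K -> K S -> 0 < k -> K (fpow S k).
Proof.
case=> _ KM _ KS; case: k => // k _; elim: k => [|k IHk]; first by rewrite fpow1.
by rewrite fpowS; apply: KM.
Qed.

Lemma abelianU (A B : {set gT}) :
  abelian (A :|: B) = [&& abelian A, abelian B & B \subset 'C(A)].
Proof. by rewrite -abelian_gen abelianY. Qed.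

Lemma abelian_set1 (x : gT) : abelian [set x].
Proof. by rewrite /abelian sub1set cent_set1 cent1id. Qed.

Lemma nonabelianP (A : {set gT}) :
  ~~ abelian A -> exists x y, [/\ x \in A, y \in A & ~ commute x y].
Proof.
case/subsetPn=> x xA; rewrite -sub_cent1 => /subsetPn[y yA /cent1P nxy].
by exists y, x.
Qed.

Lemma perm_prod_neq s x y : x \in s -> y \in s -> ~ commute x y ->
  exists t1 t2, [/\ perm_eq s t1, perm_eq s t2 & \prod_(z <- t1) z != \prod_(z <- t2) z].
Proof.
move=> xs ys nxy; have xy : x != y by apply: contra_notN nxy => /eqP->.
have yr : y \in rem x s.
  by move: ys; rewrite (perm_mem (perm_to_rem xs)) inE eq_sym (negbTE xy).
set r := rem y (rem x s).
have psr : perm_eq s [:: x, y & r].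
  by apply: perm_trans (perm_to_rem xs) _; rewrite perm_cons perm_to_rem.
exists [:: x, y & r], [:: y, x & r]; split=> //.
  by apply: perm_trans psr _; rewrite (perm_catCA [:: x] [:: y] r).
by rewrite !big_cons !mulgA; apply/eqP => /mulIg.
Qed.

Lemma seminormal_of_fpow23 (H : fseq gT -> Prop) :
  (forall S, H (fpow S 2) -> H (fpow S 3) -> H S) -> seminormal H.
Proof.
move=> H23 x _ [a [Ha Da]] [b [Hb Db]].
have {Da Db} xab g : (x g *+ 2 = (a g)%:Z :> int)%R /\ (x g *+ 3 = (b g)%:Z :> int)%R.
  by move/ffunP/(_ g): Da; move/ffunP/(_ g): Db; rewrite !ffunE.
pose S : fseq gT := [ffun g => b g - a g].
have [Sa Sb] : fpow S 2 = a /\ fpow S 3 = b.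
  by split; apply/ffunP => g; rewrite !ffunE; case: (xab g); move: (a g) (b g) (x g); lia.
exists S; split; first by apply: H23; rewrite ?Sa ?Sb.
by apply/ffunP => g; rewrite !ffunE; case: (xab g); move: (a g) (b g) (x g); lia.
Qed.

Definition fpow_classes S n : fseq gT -> Prop :=
  fun T => exists2 k, 0 < k <= n & simB T (fpow S k).

Lemma fpow_classes_simB S n T T' :
  simB T T' -> fpow_classes S n T' -> fpow_classes S n T.
Proof. by move=> TT' [k kn T'k]; exists k => //; apply: simB_trans T'k. Qed.

Definition fseq_list S : seq gT := flatten [seq nseq (S x) x | x <- enum gT].
Definition fseq_prod S : gT := \prod_(x <- fseq_list S) x.
Definition fseq_supp S : {set gT} := [set x | 0 < S x].
Definition fseq1 (u : gT) : fseq gT := [ffun x => nat_of_bool (x == u)].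

Lemma count_fseq_list S y : count_mem y (fseq_list S) = S y.
Proof.
rewrite /fseq_list count_flatten -map_comp sumnE big_map big_enum /=.
rewrite (bigD1 y) //= count_nseq /= eqxx mul1n big1 ?addn0 // => x xy.
by rewrite count_nseq /= (negbTE xy).
Qed.

Lemma mem_fseq_list S y : (y \in fseq_list S) = (y \in fseq_supp S).
Proof. by rewrite -has_pred1 has_count count_fseq_list inE. Qed.

Lemma perm_fseq_listP S t :
  perm_eq (fseq_list S) t <-> (forall x, count_mem x t = S x).
Proof.
split=> [p x|h]; first by rewrite -(seq.permP p) count_fseq_list.
by apply/allP => z _ /=; rewrite h count_fseq_list.
Qed.

Lemma in_piE S g :
  in_pi S g <-> exists2 t, perm_eq (fseq_list S) t & \prod_(x <- t) x = g.
Proof.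
split=> [[t [/perm_fseq_listP ? ?]]|[t /perm_fseq_listP ? ?]]; first by exists t.
by exists t.
Qed.

Lemma perm_fseq_list_fcat S T : perm_eq (fseq_list (fcat S T)) (fseq_list S ++ fseq_list T).
Proof. by apply/perm_fseq_listP => x; rewrite count_cat !count_fseq_list ffunE. Qed.

Lemma abelian_fseq_list S :
  abelian (fseq_supp S) -> {in fseq_list S &, forall x y, commute x y}.
Proof. by move=> /centsP cSS x y; rewrite !mem_fseq_list => /cSS; apply. Qed.

Lemma fseq_supp_fcat S T : fseq_supp (fcat S T) = fseq_supp S :|: fseq_supp T.
Proof. by apply/setP => x; rewrite !inE ffunE addn_gt0. Qed.

Lemma fseq_supp_fpow S k : 0 < k -> fseq_supp (fpow S k) = fseq_supp S.
Proof. by move=> k0; apply/setP => x; rewrite !inE ffunE muln_gt0 k0. Qed.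

Lemma fseq_supp1 u : fseq_supp (fseq1 u) = [set u].
Proof. by apply/setP => x; rewrite !inE ffunE; case: (x == u). Qed.

Lemma fseq_prod1 u : fseq_prod (fseq1 u) = u.
Proof.
have /perm_fseq_listP : forall x, count_mem x [:: u] = fseq1 u x.
  by move=> x; rewrite ffunE /= addn0 eq_sym.
by rewrite /fseq_prod => /perm_small_eq -> //; rewrite big_seq1.
Qed.

Lemma fseq_prod_sub S (H : {group gT}) : fseq_supp S \subset H -> fseq_prod S \in H.
Proof.
move=> sSH; rewrite /fseq_prod big_seq; apply: group_prod => x.
by rewrite mem_fseq_list; apply: (subsetP sSH).
Qed.

End Sequences.

Section CentreCosets.
Variable gT : finGroupType.
Local Open Scope group_scope.
Local Notation Z := 'Z([set: gT]).

Lemma exp2_card_le_prod_order (A : {set gT}) : 1 \notin A -> 2 ^ #|A| <= \prod_(g in A) #[g].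
Proof.
move=> A1; rewrite -prod_nat_const; apply: leq_prod => g gA.
by rewrite order_gt1; apply: contraNneq A1 => <-.
Qed.

Definition noncentral_cosets : {set {set gT}} := rcosets Z [set: gT] :\ Z.

Definition cosets_meeting (A : {set gT}) : {set {set gT}} :=
  [set C in noncentral_cosets | C :&: A != set0].

Lemma card_noncentral_cosets : #|noncentral_cosets| = #|[set: gT] : Z|.-1.
Proof.
rewrite [#|_ : _|](cardsD1 Z) (_ : Z \in _) //.
by apply/rcosetsP; exists 1; rewrite ?inE ?mulg1.
Qed.

Lemma rcoset_cosets_meeting (A : {set gT}) a :
  a \in A -> a \notin Z -> Z :* a \in cosets_meeting A.
Proof.
move=> aA aZ; rewrite !inE -andbA; apply/and3P; split.
- by apply: contraNneq aZ => <-; apply: rcoset_refl.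
- by apply/rcosetsP; exists a; rewrite ?inE.
by apply/set0Pn; exists a; rewrite inE rcoset_refl.
Qed.

Lemma cosets_meeting_eq0 (A : {set gT}) : cosets_meeting A = set0 -> A \subset Z.
Proof.
move=> A0; apply/subsetP => a aA; apply: contraT => aZ.
by rewrite -(in_set0 (Z :* a)) -A0 rcoset_cosets_meeting.
Qed.

(* Centralising [x] depends only on the coset [Z :* x]. *)
Lemma cent_cosets_meeting (A : {set gT}) : 'C(A) = 'C(cover (cosets_meeting A)).
Proof.
apply/setP => y; have cyZ := centerC (in_setT y).
apply/centP/centP => cAy w.
  case/bigcupP=> C; rewrite !inE => /andP[/andP[_ /rcosetsP[a _ ->]] /set0Pn[b]].
  rewrite inE !mem_rcoset => /andP[baZ bA] waZ.
  have -> : w = (w * a^-1) * (b * a^-1)^-1 * b by rewrite invMg invgK !mulgA !mulgKV.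
  apply: commuteM; last exact: cAy.
  by apply: commuteM; apply: cyZ; rewrite ?groupV.
move=> wA; have [wZ|wZ] := boolP (w \in Z); first exact: cyZ.
by apply: cAy; apply/bigcupP; exists (Z :* w); rewrite ?rcoset_cosets_meeting ?rcoset_refl.
Qed.

Definition class_invariant (S : fseq gT) : bool * gT * {set {set gT}} :=
  let A := fseq_supp S in
  (abelian A, fseq_prod S, if abelian A then cosets_meeting A else set0).

Definition invariant_range : {set bool * gT * {set {set gT}}} :=
  setX (setX [set true] Z) [set set0] :|:
  setX (setX [set true] [set: gT]) (powerset noncentral_cosets :\ set0) :|:
  setX (setX [set false] [set: gT]) [set set0].

Lemma class_invariant_range S : class_invariant S \in invariant_range.
Proof.
rewrite /class_invariant; case: ifP => [cSS|_]; last by rewrite !inE !eqxx orbT.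
have [P0|P0] := eqVneq (cosets_meeting (fseq_supp S)) set0.
  by rewrite P0 !in_setU !in_setX !in_set1 /= !eqxx fseq_prod_sub ?cosets_meeting_eq0.
rewrite !inE /= P0; apply/orP; left; apply/orP; right.
by apply/subsetP => C; rewrite inE => /andP[].
Qed.

Lemma card_invariant_range :
  #|invariant_range| <= #|Z| + #|[set: gT]| * 2 ^ #|noncentral_cosets|.
Proof.
have card_P : #|powerset noncentral_cosets :\ set0| = (2 ^ #|noncentral_cosets|).-1.
  by rewrite -card_powerset (cardsD1 set0 (powerset _)) powersetE sub0set.
have q0 : 0 < 2 ^ #|noncentral_cosets| by rewrite expn_gt0.
apply: leq_trans (leq_card_setU _ _) _.
apply: leq_trans (leq_add (leq_card_setU _ _) (leqnn _)) _.
by rewrite !cardsX !cards1 card_P !mul1n !muln1 -addnA -mulnSr prednK.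
Qed.

End CentreCosets.

Section DerivedOfOrderTwo.
Variable gT : finGroupType.
Implicit Types (S T : fseq gT) (s t : seq gT).
Local Open Scope group_scope.
Local Notation G' := [~: [set: gT], [set: gT]].
Hypothesis card_derived : #|G'| = 2.

Lemma derived_pair : exists2 e, e != 1 & G' = [set 1; e].
Proof.
have /cards1P[e De] : #|G' :\ 1| == 1%N.
  by move: card_derived; rewrite (cardsD1 1) group1 add1n => -[->].
have : e \in G' :\ 1 by rewrite De set11.
by rewrite !inE => /andP[e1 _]; exists e; rewrite // -De setD1K.
Qed.

Lemma derived_central c y : c \in G' -> commute c y.
Proof.
move=> cG'; apply/commgP; rewrite -conjg_fix; apply/eqP.
have cyG' : c ^ y \in G' by rewrite memJ_norm // (subsetP (commg_norml _ _)) ?inE.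
have [e e1 De] := derived_pair; move: cG' cyG'; rewrite De !inE.
by case/predU1P=> [->|/eqP->]; rewrite ?conj1g // conjg_eq1 (negbTE e1) => /eqP.
Qed.

(* Moving [x] to the front past the terms of [t1] costs the commutator
   [[~ \prod t1, x]], which lies in the centre since it lies in [G']. *)
Lemma perm_prod_derived s t : perm_eq s t -> exists c, [/\ c \in G',
  \prod_(x <- t) x = c * \prod_(x <- s) x & {in s &, forall x y, commute x y} -> c = 1].
Proof.
elim: s t => [|x s IHs] t.
  by rewrite perm_sym => /perm_nilP->; exists 1; rewrite group1 !big_nil mulg1.
move=> pxst; have xt : x \in t by rewrite -(perm_mem pxst) mem_head.
case/splitPr: t / xt pxst => t1 t2 pxst.
have /IHs[c [cG' Dc c1]] : perm_eq s (t1 ++ t2).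
  by rewrite -(perm_cons x) (perm_trans pxst) // (perm_catCA t1 [:: x] t2).
set d := [~ \prod_(z <- t1) z, x].
have dG' : d \in G' by rewrite mem_commg ?inE.
exists (d * c); split; first by rewrite groupM.
  rewrite big_cat /= in Dc; rewrite big_cat !big_cons /= mulgA (commgC _ x) -/d; clearbody d.
  rewrite -mulgA (derived_central _ dG') mulgA -(derived_central (x * _ * _) dG').
  by rewrite -!mulgA Dc (mulgA x) -(derived_central x cG') -mulgA.
move=> cxs; rewrite c1 => [|y z ys zs]; last by apply: cxs; rewrite inE ?ys ?zs orbT.
rewrite mulg1; apply/eqP/commgP; rewrite big_seq.
apply/commute_sym/commute_prod => z zt1; apply: cxs (mem_head _ _) _.
by rewrite (perm_mem pxst) mem_cat zt1.
Qed.

Lemma fseq_prod_perm S t : perm_eq (fseq_list S) t -> exists c, [/\ c \in G',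
  \prod_(x <- t) x = c * fseq_prod S & abelian (fseq_supp S) -> c = 1].
Proof.
by case/perm_prod_derived=> c [cG' Dc c1]; exists c; split=> // /abelian_fseq_list.
Qed.

Lemma in_piP S g : in_pi S g <->
  (if abelian (fseq_supp S) then g = fseq_prod S else g * (fseq_prod S)^-1 \in G').
Proof.
rewrite in_piE; split=> [[t /fseq_prod_perm[c [cG' -> c1]] <-]|].
  by case: ifP => [/c1->|_]; rewrite ?mul1g // mulgK.
case: ifPn => [_ ->|/nonabelianP[x [y [xS yS nxy]]] gS]; first by exists (fseq_list S).
rewrite -!mem_fseq_list in xS yS.
have [t1 [t2 [p1 p2 n12]]] := perm_prod_neq xS yS nxy.
have [c1 [c1G' D1 _]] := fseq_prod_perm p1; have [c2 [c2G' D2 _]] := fseq_prod_perm p2.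
have c12 : c1 != c2 by apply: contraNneq n12; rewrite D1 D2 => ->.
have Dderived : G' = [set c1; c2].
  by apply/eqP; rewrite eq_sym eqEcard subUset !sub1set c1G' c2G' cards2 c12 card_derived.
move: gS; rewrite Dderived !inE => /orP[]/eqP/(canRL (mulgKV _)) ->.
  by exists t1.
by exists t2.
Qed.

Lemma inBP S :
  inB S <-> (if abelian (fseq_supp S) then fseq_prod S = 1 else fseq_prod S \in G').
Proof.
rewrite /inB in_piP mul1g groupV; case: ifP => // _.
by split=> ->.
Qed.

Lemma fseq_prod_fcat S T : exists c, [/\ c \in G',
  fseq_prod (fcat S T) = c * (fseq_prod S * fseq_prod T) &
  abelian (fseq_supp (fcat S T)) -> c = 1].
Proof.
have [c [cG' Dc c1]] := fseq_prod_perm (perm_fseq_list_fcat S T).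
exists c^-1; split; first by rewrite groupV.
  by rewrite big_cat /= in Dc; rewrite Dc mulKg.
by move=> /c1->; rewrite invg1.
Qed.

Lemma fseq_prod_fpow S k : 0 < k -> exists c, [/\ c \in G',
  fseq_prod (fpow S k) = c * fseq_prod S ^+ k & abelian (fseq_supp S) -> c = 1].
Proof.
case: k => // k _; elim: k => [|k [c [cG' Dc c1]]].
  by exists 1; rewrite group1 fpow1 mul1g expg1.
have [d [dG' Dd d1]] := fseq_prod_fcat S (fpow S k.+1).
exists (d * c); split; first by rewrite groupM.
  rewrite fpowS Dd Dc (mulgA (fseq_prod S)) -(derived_central (fseq_prod S) cG').
  by rewrite -!mulgA -expgS.
by move=> cSS; rewrite c1 // d1 ?mulg1 // fseq_supp_fcat fseq_supp_fpow // setUid.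
Qed.

Lemma inB_fcat S T : inB (fcat S T) <-> (if abelian (fseq_supp (fcat S T))
  then fseq_prod S * fseq_prod T = 1 else fseq_prod S * fseq_prod T \in G').
Proof.
rewrite inBP; have [c [cG' -> c1]] := fseq_prod_fcat S T.
by case: ifP => [/c1->|_]; rewrite ?mul1g ?(groupMl _ cG').
Qed.

Lemma simB_abelian S S' : abelian (fseq_supp S) -> abelian (fseq_supp S') ->
  fseq_prod S = fseq_prod S' -> 'C(fseq_supp S) = 'C(fseq_supp S') -> simB S S'.
Proof.
move=> cSS cS'S' eq_prod eq_cent T.
by rewrite !inB_fcat !fseq_supp_fcat !abelianU cSS cS'S' eq_prod eq_cent.
Qed.

Lemma simB_nonabelian S S' : ~~ abelian (fseq_supp S) -> ~~ abelian (fseq_supp S') ->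
  fseq_prod S * (fseq_prod S')^-1 \in G' -> simB S S'.
Proof.
move=> ncSS ncS'S' SS'G' T; rewrite !inB_fcat !fseq_supp_fcat !abelianU.
rewrite (negbTE ncSS) (negbTE ncS'S') -[fseq_prod S](mulgKV (fseq_prod S')) -mulgA.
by rewrite groupMl.
Qed.

Lemma inB_fcat1_abelian T u : abelian (fseq_supp T) -> u \in 'C(fseq_supp T) ->
  inB (fcat T (fseq1 u)) <-> fseq_prod T * u = 1.
Proof.
move=> cTT cTu; rewrite inB_fcat fseq_supp_fcat abelianU fseq_supp1 abelian_set1.
by rewrite sub1set cTT cTu fseq_prod1.
Qed.

(* Tested against [fseq1 (u * p^-1)] with [u \in G'], an abelian [T'] tells
   [u = 1] from [u = e], a nonabelian [T] cannot. *)
Lemma simB_nonabelian_closed T T' : simB T T' ->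
  ~~ abelian (fseq_supp T) -> ~~ abelian (fseq_supp T').
Proof.
move=> TT' ncTT; apply/negP => cT'T'; set p := fseq_prod T'.
have [e e1 De] := derived_pair; have eG' : e \in G' by rewrite De !inE eqxx orbT.
have on_T' u : u \in G' -> inB (fcat T (fseq1 (u * p^-1))) <-> u = 1.
  move=> uG'; have cT'u : u * p^-1 \in 'C(fseq_supp T').
    by rewrite groupM ?groupV ?fseq_prod_sub //; apply/centP => y _; apply: derived_central.
  by rewrite TT' inB_fcat1_abelian // mulgA -(derived_central p uG') mulgK.
have on_T u : u \in G' -> inB (fcat T (fseq1 (u * p^-1))) <-> inB (fcat T (fseq1 p^-1)).
  move=> uG'; rewrite !inB_fcat !fseq_supp_fcat !abelianU (negbTE ncTT) /= !fseq_prod1.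
  by rewrite mulgA -(derived_central _ uG') -mulgA groupMl.
have : inB (fcat T (fseq1 (e * p^-1))).
  by apply/(on_T e eG')/(on_T 1 (group1 _)); apply/(on_T' 1 (group1 _)).
by move/(on_T' e eG')/eqP; rewrite (negbTE e1).
Qed.

Lemma inB_fpow23 S : inB (fpow S 2) -> inB (fpow S 3) -> inB S.
Proof.
rewrite !inBP !fseq_supp_fpow //.
have [c2 [c2G' -> c21]] := fseq_prod_fpow S (isT : 0 < 2).
have [c3 [c3G' -> c31]] := fseq_prod_fpow S (isT : 0 < 3).
rewrite (expgS _ 2); case: ifP => [cSS|_]; last first.
  by rewrite (groupMl _ c2G') (groupMl _ c3G') => /groupMr->.
by rewrite c21 // c31 // !mul1g => ->; rewrite mulg1.
Qed.

Lemma fseq_prod_fpow_abelian S k : abelian (fseq_supp S) -> 0 < k ->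
  fseq_prod (fpow S k) = fseq_prod S ^+ k.
Proof. by move=> cSS /(fseq_prod_fpow S)[c [_ -> /(_ cSS)->]]; rewrite mul1g. Qed.

Lemma simB_fpow S a b : abelian (fseq_supp S) -> 0 < a -> 0 < b ->
  a = b %[mod #[fseq_prod S]] -> simB (fpow S a) (fpow S b).
Proof.
move=> cSS a0 b0 eq_ab; apply: simB_abelian; rewrite ?fseq_supp_fpow //.
by rewrite !fseq_prod_fpow_abelian // -expg_mod_order eq_ab expg_mod_order.
Qed.

Lemma fpow_classes_fpow S m : abelian (fseq_supp S) -> 0 < m ->
  fpow_classes S #[fseq_prod S] (fpow S m).
Proof.
move=> cSS m0; exists (m.-1 %% #[fseq_prod S]).+1; first by rewrite ltn_pmod ?order_gt0.
by apply: simB_fpow => //; rewrite -addn1 modnDml addn1 prednK.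
Qed.

Lemma class_subgroup_fpow_classes S :
  abelian (fseq_supp S) -> class_subgroup (fpow_classes S #[fseq_prod S]).
Proof.
move=> cSS; set n := #[fseq_prod S]; have n0 : 0 < n := order_gt0 _.
split; first by move=> T T' /simB_sym; apply: fpow_classes_simB.
  move=> T U [a /andP[a0 _] Ta] [b /andP[b0 _] Ub].
  apply: fpow_classes_simB (simB_cat Ta Ub) _; rewrite -fpowD.
  by apply: fpow_classes_fpow; rewrite ?addn_gt0 ?a0.
exists (fpow S n); first by exists n; rewrite ?n0 /=.
split=> T [k /andP[k0 kn] Tk].
  apply: simB_trans (simB_catl _ Tk) _; apply: simB_trans (simB_sym Tk).
  by rewrite -fpowD; apply: simB_fpow; rewrite ?addn_gt0 ?n0 ?modnDl.
exists (fpow S (n - k + n)); first by apply: fpow_classes_fpow; rewrite ?addn_gt0 ?n0 ?orbT.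
apply: simB_trans (simB_catr _ Tk) _; rewrite -fpowD.
by apply: simB_fpow; rewrite ?addn_gt0 ?k0 // addnA subnKC // modnDr.
Qed.

Lemma fpow_simB_neq S i j : abelian (fseq_supp S) -> 0 < i ->
  i < j <= #[fseq_prod S] -> ~ simB (fpow S i) (fpow S j).
Proof.
move=> cSS i0 /andP[ij jn] Sij; have {jn} ji_lt_n : j - i < #[fseq_prod S] by lia.
have j0 : 0 < j := ltn_trans i0 ij.
have cSkSk k : 0 < k -> abelian (fseq_supp (fpow S k)) by move=> k0; rewrite fseq_supp_fpow.
have cSkp k : 0 < k -> (fseq_prod S ^+ i)^-1 \in 'C(fseq_supp (fpow S k)).
  by move=> k0; rewrite fseq_supp_fpow // groupV groupX ?fseq_prod_sub.
have /Sij : inB (fcat (fpow S i) (fseq1 (fseq_prod S ^+ i)^-1)).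
  by apply/(inB_fcat1_abelian (cSkSk _ i0) (cSkp _ i0)); rewrite fseq_prod_fpow_abelian ?mulgV.
move/(inB_fcat1_abelian (cSkSk _ j0) (cSkp _ j0)); rewrite fseq_prod_fpow_abelian //.
rewrite -(subnK (ltnW ij)) expgD mulgK => /eqP; rewrite -order_dvdn => /dvdn_leq.
by rewrite subn_gt0 ij leqNgt ji_lt_n => /(_ isT).
Qed.

Lemma fseq_prod_fpow_order S : fseq_prod (fpow S #[fseq_prod S]) \in G'.
Proof.
have [c [cG' -> _]] := fseq_prod_fpow S (order_gt0 (fseq_prod S)).
by rewrite expg_order mulg1.
Qed.

Lemma class_subgroup_nonabelian S :
  ~~ abelian (fseq_supp S) -> class_subgroup (fun T => ~~ abelian (fseq_supp T)).
Proof.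
move=> ncSS; split; first exact: simB_nonabelian_closed.
  by move=> T U ncTT _; rewrite fseq_supp_fcat abelianU (negbTE ncTT).
set E := fpow S #[fseq_prod S].
have ncEE : ~~ abelian (fseq_supp E) by rewrite fseq_supp_fpow.
exists E => //; split=> T ncTT.
  apply: simB_nonabelian; rewrite ?fseq_supp_fcat ?abelianU ?(negbTE ncEE) //.
  have [c [cG' -> _]] := fseq_prod_fcat E T.
  by rewrite mulgA mulgK groupM ?fseq_prod_fpow_order.
set m := (#[fseq_prod T] * 2)%N; have m1 : 0 < m.-1 by move: (order_gt0 (fseq_prod T)); lia.
have m0 : 0 < m := leq_trans m1 (leq_pred m).
exists (fpow T m.-1); first by rewrite fseq_supp_fpow.
rewrite -{1}(fpow1 T) -fpowD add1n prednK //.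
apply: simB_nonabelian; rewrite ?fseq_supp_fpow //.
have [c [cG' -> _]] := fseq_prod_fpow T m0.
by rewrite expgM expg_order expg1n mulg1 groupM ?groupV ?fseq_prod_fpow_order.
Qed.

Lemma class_semigroup_is_clifford : clifford_class_semigroup gT.
Proof.
move=> S; have [cSS|ncSS] := boolP (abelian (fseq_supp S)).
  exists (fpow_classes S #[fseq_prod S]); first exact: class_subgroup_fpow_classes.
  by exists 1%N; rewrite ?order_gt0 ?fpow1.
by exists (fun T => ~~ abelian (fseq_supp T)); first exact: class_subgroup_nonabelian ncSS.
Qed.

Lemma in_pi_singleton S g : (forall h, in_pi S h <-> h = g) ->
  abelian (fseq_supp S) /\ g = fseq_prod S.
Proof.
move=> piS; have [cSS|ncSS] := boolP (abelian (fseq_supp S)).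
  by have /in_piP := proj2 (piS g) erefl; rewrite cSS.
have [e e1 De] := derived_pair; have eG' : e \in G' by rewrite De !inE eqxx orbT.
have Dg : fseq_prod S = g by apply/piS/in_piP; rewrite (negbTE ncSS) mulgV group1.
have : e * fseq_prod S = g by apply/piS/in_piP; rewrite (negbTE ncSS) mulgK.
rewrite -Dg -[in RHS](mul1g (fseq_prod S)) => /mulIg e_eq1.
by rewrite e_eq1 eqxx in e1.
Qed.

Lemma class_invariant_simB S S' : class_invariant S = class_invariant S' -> simB S S'.
Proof.
rewrite /class_invariant; case=> eq_ab eq_prod; rewrite -eq_ab.
case: ifPn => [cSS eq_cosets|ncSS _].
  apply: simB_abelian; rewrite -?eq_ab //.
  by rewrite cent_cosets_meeting eq_cosets -cent_cosets_meeting.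
by apply: simB_nonabelian; rewrite -?eq_ab // eq_prod mulgV.
Qed.

Local Notation Z := 'Z([set: gT]).

Lemma index_center_ge4 : 4 <= #|[set: gT] : Z|.
Proof.
have nab : ~~ abelian [set: gT].
  by apply/negP => /commG1P G'1; move: card_derived; rewrite G'1 cards1.
have nZG : [set: gT] \subset 'N(Z) := normal_norm (center_normal _).
rewrite leqNgt; apply: contra nab => index_lt4.
apply: (@cyclic_center_factor_abelian _ [set: gT]%G).
have [index1|index_neq1] := eqVneq #|[set: gT] : Z| 1%N.
  by rewrite (card1_trivg (G := ([set: gT] / Z)%G)) ?cyclic1 //= card_quotient ?index1.
apply: prime_cyclic; rewrite card_quotient //.
by move: (indexg_gt0 [set: gT] Z) index_neq1 index_lt4; case: #|_ : _| => [|[|[|[|]]]].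
Qed.

Lemma card_center_ge2 : 2 <= #|Z|.
Proof.
rewrite -card_derived subset_leq_card //; apply/subsetP => c cG'.
by apply/centerP; split=> [|y _]; [rewrite inE | exact: derived_central].
Qed.

Lemma card_invariant_range_le_prod :
  #|invariant_range gT| <= #|Z| + \prod_(g in [set: gT] :\: Z) #[g].
Proof.
apply: leq_trans (card_invariant_range _) _; rewrite leq_add2l.
apply: leq_trans (exp2_card_le_prod_order _); last by rewrite !inE group1.
rewrite card_noncentral_cosets cardsD setTI -(Lagrange (subsetT Z)) /=.
move: index_center_ge4 card_center_ge2; case: #|_ : _| => // m m3; case: #|Z| => // n n1.
rewrite mulnSr addnK /= mulSn expnD [(_ * 2 ^ m)%N]mulnC leq_pmul2l ?expn_gt0 //.
have := succ_mul_succ_le_exp2 m3 n1; rewrite [(m * n)%N]mulnC; nia.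
Qed.

End DerivedOfOrderTwo.

Theorem theorem3p10 (gT : finGroupType)
  (hG' : #|([~: [set: gT], [set: gT]])%g| = 2) :
  seminormal (@inB gT) /\
  clifford_class_semigroup gT /\
  (forall (S : fseq gT) (g : gT),
     (forall h, in_pi S h <-> h = g) ->
     let n := #[g]%g in
     class_subgroup (fun T => exists2 k, (0 < k <= n)%N & simB T (fpow S k)) /\
     (forall i j, (0 < i)%N -> (i < j <= n)%N -> ~ simB (fpow S i) (fpow S j)) /\
     (forall K, class_subgroup K -> K S ->
        forall k, (0 < k <= n)%N -> K (fpow S k))) /\
  (exists reps : seq (fseq gT),
     (size reps <= #|('Z([set: gT]))%g| +
        \prod_(g in ([set: gT] :\: 'Z([set: gT]))%g) #[g]%g)%N /\
     forall S : fseq gT, exists2 R, R \in reps & simB S R).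
Proof.
split; first exact/seminormal_of_fpow23/inB_fpow23.
split; first exact: class_semigroup_is_clifford.
split.
  move=> S g /(in_pi_singleton hG')[cSS ->]; split; first exact: class_subgroup_fpow_classes.
  split=> [i j|K KK KS k /andP[k0 _]]; first exact: fpow_simB_neq.
  exact: class_subgroup_fpow.
have [reps [size_reps reps_cover]] :=
  finite_transversal [ffun=> 0%N] (@class_invariant_range gT).
exists reps; split; first exact: leq_trans size_reps (card_invariant_range_le_prod hG').
move=> S; have [R Rreps eq_inv] := reps_cover S.
by exists R; last exact/simB_sym/(class_invariant_simB hG').
Qed.
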